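(* Let $\mathcal A=\bigoplus_{k=1}^\ell M_{n_k}(\mathbb C)$, let $i\neq j$, and let $x_ix_i^\ast\in M_{n_i}(\mathbb C)$ and $x_jx_j^\ast\in M_{n_j}(\mathbb C)$ be rank-one matrices of norm one. For a unimodular $\mu\in\mathbb C$, let $R_\mu\in\mathcal A$ be the element whose $i$-th block is $x_ix_i^\ast$, whose $j$-th block is $\mu x_jx_j^\ast$, and whose other blocks are zero. Then there is a unique unimodular $\mu$ such that $R_\mu\perp I$, namely $\mu=-1$.
   Context: $\mathcal A$ is the $C^\ast$-algebra of block-diagonal matrices with the operator norm, $I$ its identity. $X\perp Y$ (Birkhoff–James orthogonality) means $\|X+\lambda Y\|\ge\|X\|$ for all $\lambda\in\mathbb C$. *)

From mathcomp Require Import all_boot all_algebra.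
From mathcomp Require Import classical_sets reals complex.
Set Implicit Arguments. Unset Strict Implicit. Unset Printing Implicit Defensive.
Import GRing.Theory Num.Theory.
Local Open Scope ring_scope.

Section BlockAlg.
Variable R : realType.
Local Notation C := R[i].

Definition vnorm2 m (v : 'cV[C]_m) : R :=
  \sum_(a < m) ((complex.Re (v a 0)) ^+ 2 + (complex.Im (v a 0)) ^+ 2).
Definition vnorm m (v : 'cV[C]_m) : R := Num.sqrt (vnorm2 v).

Definition adjmx m p (A : 'M[C]_(m, p)) : 'M[C]_(p, m) := (map_mx (fun z => z^*) A)^T.

Definition mxopnorm m (A : 'M[C]_m) : R :=
  sup [set r | exists v : 'cV[C]_m, vnorm v <= 1 /\ r = vnorm (A *m v)].

Definition balg (l : nat) (n : 'I_l -> nat) := forall k : 'I_l, 'M[C]_(n k).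
Definition bvec (l : nat) (n : 'I_l -> nat) := forall k : 'I_l, 'cV[C]_(n k).

Definition badd l n (X Y : @balg l n) : balg n := fun k => X k + Y k.
Definition bscale l n (c : C) (X : @balg l n) : balg n := fun k => c *: X k.
Definition bone l n : @balg l n := fun k => 1%:M.
Definition bapply l n (X : @balg l n) (v : bvec n) : bvec n := fun k => X k *m v k.

(* Euclidean norm on C^(n_1 + ... + n_l) = (+)_k C^(n k) *)
Definition bvnorm l n (v : @bvec l n) : R := Num.sqrt (\sum_k vnorm2 (v k)).

Definition bnorm l n (X : @balg l n) : R :=
  sup [set r | exists v : bvec n, bvnorm v <= 1 /\ r = bvnorm (bapply X v)].

Definition BJorth l n (X Y : @balg l n) : Prop :=
  forall lam : C, bnorm X <= bnorm (badd X (bscale lam Y)).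

End BlockAlg.

From mathcomp Require Import all_boot all_order all_algebra.
From mathcomp Require Import classical_sets reals complex.
From mathcomp Require Import ring lra.
Import Order.TTheory GRing.Theory Num.Theory.

(* Every block of R_mu + lam I has the form c x x^* + lam I with x a unit
   vector; on a vector w it acts with squared norm
     |lam|^2 |w|^2 + (|c + lam|^2 - |lam|^2) |<x, w>|^2,
   so its norm is max(|lam|, |c + lam|).  Hence ||R_mu|| = 1 and
     max(|1 + lam|, |mu + lam|) <= ||R_mu + lam I|| <= max(|lam|, |1 + lam|, |mu + lam|).
   For mu = -1 the lower bound is >= 1 for every lam.  For mu <> -1 the choice
   lam = -(1 + mu)/4 gives |1 + lam| = |3 - mu|/4 and |mu + lam| = |3 mu - 1|/4,
   both of square (10 - 6 Re mu)/16 < 1, and |lam| <= 1/2. *)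

Set Implicit Arguments. Unset Strict Implicit. Unset Printing Implicit Defensive.
Local Open Scope complex_scope.
Local Open Scope ring_scope.

Section Sup.
Variables (R : realType) (T : Type) (P : T -> Prop) (f : T -> R) (M : R).
Hypothesis f_le : forall v, P v -> f v <= M.

Lemma sup_sqrt_le (v0 : T) : P v0 ->
  sup [set r | exists v, P v /\ r = Num.sqrt (f v)] <= Num.sqrt M.
Proof.
move=> Pv0; apply: ge_sup; first by exists (Num.sqrt (f v0)), v0.
by move=> r [v [Pv ->]]; rewrite ler_wsqrtr ?f_le.
Qed.

Lemma sup_sqrt_ge (v0 : T) : P v0 ->
  Num.sqrt (f v0) <= sup [set r | exists v, P v /\ r = Num.sqrt (f v)].
Proof.
move=> Pv0; apply: sup_upper_bound; last by exists v0.
split; first by exists (Num.sqrt (f v0)), v0.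
by exists (Num.sqrt M) => r [v [Pv ->]]; rewrite ler_wsqrtr ?f_le.
Qed.

End Sup.

Section ComplexVectors.
Variable R : realType.
Local Notation C := R[i].

Definition cnorm2 (z : C) : R := complex.Re z ^+ 2 + complex.Im z ^+ 2.
Arguments cnorm2 : simpl never.

Definition cdot m (u v : 'cV[C]_m) : C := \sum_a (u a 0)^* * v a 0.

Lemma cnorm2E (a b : R) : cnorm2 (a +i* b) = a ^+ 2 + b ^+ 2.
Proof. by []. Qed.

Lemma cnorm2R (r : R) : cnorm2 r%:C = r ^+ 2.
Proof. by rewrite cnorm2E expr0n addr0. Qed.

Lemma cnorm20 : cnorm2 0 = 0.
Proof. by rewrite /cnorm2 /= expr0n addr0. Qed.

Lemma cnorm21 : cnorm2 1 = 1.
Proof. by rewrite /cnorm2 /= expr0n expr1n addr0. Qed.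

Lemma conj_realc (r : R) : (r%:C)^* = r%:C :> C.
Proof. exact: conjc_real. Qed.

Lemma cnorm2C (z : C) : (cnorm2 z)%:C = z * z^*.
Proof. by rewrite add_Re2_Im2 normCK. Qed.

Lemma cnorm2_ge0 (z : C) : 0 <= cnorm2 z.
Proof. by rewrite addr_ge0 ?sqr_ge0. Qed.

Lemma cnorm2_normC1 (z : C) : `|z| = 1 -> cnorm2 z = 1.
Proof. by move=> z1; apply: complexI; rewrite add_Re2_Im2 z1 expr1n. Qed.

Lemma vnorm2_ge0 m (v : 'cV[C]_m) : 0 <= vnorm2 v.
Proof. by apply: sumr_ge0 => a _; apply: cnorm2_ge0. Qed.

Lemma vnorm2C m (v : 'cV[C]_m) : (vnorm2 v)%:C = \sum_a v a 0 * (v a 0)^*.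
Proof. by rewrite rmorph_sum; apply: eq_bigr => a _; apply: cnorm2C. Qed.

Lemma vnorm20 m : vnorm2 (0 : 'cV[C]_m) = 0.
Proof. by apply: big1 => a _; rewrite mxE; apply: cnorm20. Qed.

Lemma vnorm2_eq0 m (v : 'cV[C]_m) : vnorm2 v = 0 -> v = 0.
Proof.
move=> v0; apply/matrixP => a b; rewrite !ord1 mxE; apply/eqP.
have /(congr1 (fun r : R => r%:C)) : cnorm2 (v a 0) = 0.
  exact: (psumr_eq0P (F := fun a => cnorm2 (v a 0)) (fun a _ => cnorm2_ge0 _) v0).
by rewrite cnorm2C => /eqP; rewrite mulf_eq0 conjC_eq0 orbb.
Qed.

Lemma cdotvv m (v : 'cV[C]_m) : cdot v v = (vnorm2 v)%:C.
Proof. by rewrite vnorm2C; apply: eq_bigr => a _; rewrite mulrC. Qed.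

Lemma cdotZr m (u v : 'cV[C]_m) a : cdot u (a *: v) = a * cdot u v.
Proof. by rewrite /cdot mulr_sumr; apply: eq_bigr => b _; rewrite mxE; ring. Qed.

Lemma cdot0l m (v : 'cV[C]_m) : cdot 0 v = 0.
Proof. by apply: big1 => a _; rewrite mxE conjC0 mul0r. Qed.

Lemma vnorm2_lincomb m (u v : 'cV[C]_m) a b :
  (vnorm2 (a *: u + b *: v))%:C =
  a * a^* * (vnorm2 u)%:C + a * b^* * (cdot u v)^* + b * a^* * cdot u v
  + b * b^* * (vnorm2 v)%:C.
Proof.
rewrite !vnorm2C /cdot rmorph_sum !mulr_sumr -!big_split /=.
by apply: eq_bigr => c _; rewrite !mxE !rmorphD !rmorphM /= !conjCK; ring.
Qed.

Lemma vnorm2Z m (v : 'cV[C]_m) a : vnorm2 (a *: v) = cnorm2 a * vnorm2 v.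
Proof.
apply: complexI; have := vnorm2_lincomb v v a 0.
by rewrite !scale0r !addr0 => ->; rewrite rmorphM /= cnorm2C; ring.
Qed.

Lemma cdot_CauchySchwarz m (u v : 'cV[C]_m) :
  cnorm2 (cdot u v) <= vnorm2 u * vnorm2 v.
Proof.
have [u0|u_neq0] := eqVneq (vnorm2 u) 0.
  by rewrite (vnorm2_eq0 u0) vnorm20 cdot0l cnorm20 mul0r.
have u_gt0 : 0 < vnorm2 u by rewrite lt0r u_neq0 vnorm2_ge0.
have := vnorm2_ge0 ((- cdot u v) *: u + (vnorm2 u)%:C *: v).
have -> : vnorm2 ((- cdot u v) *: u + (vnorm2 u)%:C *: v) =
          vnorm2 u * (vnorm2 u * vnorm2 v - cnorm2 (cdot u v)).
  apply: complexI; rewrite vnorm2_lincomb conj_realc.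
  by rewrite !rmorphM rmorphB rmorphM /= cnorm2C rmorphN /=; ring.
by rewrite pmulr_rge0 // subr_ge0.
Qed.

Lemma mul_adjmx_col m (u v : 'cV[C]_m) : adjmx u *m v = (cdot u v)%:M.
Proof.
apply/matrixP => a b; rewrite !ord1 !mxE; apply: eq_bigr => c _.
by rewrite !mxE.
Qed.

Lemma mul_rank1_col m (x v : 'cV[C]_m) : (x *m adjmx x) *m v = cdot x v *: x.
Proof. by rewrite -mulmxA mul_adjmx_col mul_mx_scalar. Qed.

Lemma vnorm2_rank1 m (x v : 'cV[C]_m) :
  vnorm2 ((x *m adjmx x) *m v) = cnorm2 (cdot x v) * vnorm2 x.
Proof. by rewrite mul_rank1_col vnorm2Z. Qed.

Lemma mxopnorm_rank1 m (x : 'cV[C]_m) : mxopnorm (x *m adjmx x) = vnorm2 x.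
Proof.
have x_ge0 := vnorm2_ge0 x.
rewrite -[RHS](ger0_norm x_ge0) -sqrtr_sqr.
pose P v := vnorm (v : 'cV[C]_m) <= 1.
pose f v := vnorm2 ((x *m adjmx x) *m v).
have f_le v : P v -> f v <= vnorm2 x ^+ 2.
  rewrite /P /vnorm -sqrtr1 ler_sqrt // => v_le1; rewrite /f vnorm2_rank1.
  apply: le_trans (_ : vnorm2 x * vnorm2 v * vnorm2 x <= _).
    by rewrite ler_wpM2r ?cdot_CauchySchwarz.
  by rewrite mulrAC expr2 ler_piMr ?mulr_ge0.
apply/le_anti/andP; split.
  by apply: (sup_sqrt_le f_le (v0 := 0)); rewrite /P /vnorm vnorm20 sqrtr0.
have [x0|x_neq0] := eqVneq (vnorm2 x) 0.
  rewrite x0 expr0n sqrtr0; apply: le_trans (sup_sqrt_ge f_le (v0 := 0) _).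
    by rewrite /f mulmx0 vnorm20 sqrtr0.
  by rewrite /P /vnorm vnorm20 sqrtr0.
have sqrt_gt0 : 0 < Num.sqrt (vnorm2 x) by rewrite sqrtr_gt0 lt0r x_neq0.
pose v0 := (Num.sqrt (vnorm2 x))^-1%:C *: x.
have v0_unit : vnorm2 v0 = 1.
  by rewrite vnorm2Z cnorm2R exprVn sqr_sqrtr // mulVf.
have -> : vnorm2 x ^+ 2 = f v0.
  rewrite /f vnorm2_rank1 cdotZr cdotvv -rmorphM cnorm2R exprMn exprVn.
  by rewrite sqr_sqrtr //; field.
by apply: (sup_sqrt_ge f_le); rewrite /P /vnorm v0_unit sqrtr1.
Qed.

Lemma vnorm2_rank1_shift m (x w : 'cV[C]_m) c lam : vnorm2 x = 1 ->
  vnorm2 ((c *: (x *m adjmx x) + lam *: 1%:M) *m w) =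
  cnorm2 lam * vnorm2 w + (cnorm2 (c + lam) - cnorm2 lam) * cnorm2 (cdot x w).
Proof.
move=> x1; rewrite mulmxDl -!scalemxAl mul_rank1_col mul1mx scalerA.
apply: complexI; rewrite vnorm2_lincomb x1.
by rewrite rmorphD !rmorphM rmorphB /= !cnorm2C rmorphD /=; ring.
Qed.

Lemma rank1_shift_bound m (x w : 'cV[C]_m) c lam M :
    (c != 0 -> vnorm2 x = 1) -> cnorm2 lam <= M -> cnorm2 (c + lam) <= M ->
  vnorm2 ((c *: (x *m adjmx x) + lam *: 1%:M) *m w) <= M * vnorm2 w.
Proof.
move=> x1 lam_le c_lam_le; have [c0|/x1 {}x1] := eqVneq c 0.
  by rewrite c0 scale0r add0r -scalemxAl mul1mx vnorm2Z ler_wpM2r ?vnorm2_ge0.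
rewrite vnorm2_rank1_shift //.
have := cdot_CauchySchwarz x w; rewrite x1 mul1r => CS.
have := cnorm2_ge0 (cdot x w) => dot_ge0.
have : 0 <= (M - cnorm2 lam) * (vnorm2 w - cnorm2 (cdot x w)).
  by rewrite mulr_ge0 // subr_ge0.
have : 0 <= (M - cnorm2 (c + lam)) * cnorm2 (cdot x w).
  by rewrite mulr_ge0 // subr_ge0.
nra.
Qed.

Lemma rank1_shift_at m (x : 'cV[C]_m) c lam : vnorm2 x = 1 ->
  vnorm2 ((c *: (x *m adjmx x) + lam *: 1%:M) *m x) = cnorm2 (c + lam).
Proof. by move=> x1; rewrite vnorm2_rank1_shift // cdotvv x1 cnorm2R; ring. Qed.

Lemma cnorm2_shift_pm1 (lam : C) : 1 <= cnorm2 (1 + lam) \/ 1 <= cnorm2 (-1 + lam).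
Proof.
case: lam => a b; rewrite !cnorm2E /= oppr0 !add0r.
by have [|lt1] := lerP 1 ((1 + a) ^+ 2 + b ^+ 2); [left | right; nra].
Qed.

Lemma unimodular_shift_contract (mu : C) : cnorm2 mu = 1 -> mu != -1 ->
  exists lam, [/\ cnorm2 lam < 1, cnorm2 (1 + lam) < 1 & cnorm2 (mu + lam) < 1].
Proof.
case: mu => p q; rewrite cnorm2E => pq1 mu_neq.
have p_gt : -1 < p.
  rewrite lt_def; apply/andP; split; last by nra.
  apply: contra mu_neq => /eqP p_m1.
  have q0 : q = 0 by apply/eqP; rewrite -sqrf_eq0; apply/eqP; nra.
  by rewrite p_m1 q0 eq_complex /= oppr0 !eqxx.
exists ((- (1 + p) / 4) +i* (- q / 4)); rewrite /= !cnorm2E /= add0r.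
split; nra.
Qed.

End ComplexVectors.

Section BlockAlgebra.
Variables (R : realType) (l : nat) (n : 'I_l -> nat).
Local Notation C := R[i].

Definition brank1 (c : 'I_l -> C) (x : bvec R n) : balg R n :=
  fun k => c k *: (x k *m adjmx (x k)).

Definition bvproj (i : 'I_l) (v : bvec R n) : bvec R n :=
  fun k => if k == i then v k else 0.

Definition coef2 (i j : 'I_l) (a b : C) : 'I_l -> C :=
  fun k => if k == i then a else if k == j then b else 0.

Section Coef2.
Variables (i j : 'I_l) (a b : C).

Lemma coef2_l : coef2 i j a b i = a.
Proof. by rewrite /coef2 eqxx. Qed.

Lemma coef2_r : i != j -> coef2 i j a b j = b.
Proof. by rewrite /coef2 eq_sym => /negbTE ->; rewrite eqxx. Qed.

Lemma coef2_supp k : coef2 i j a b k != 0 -> k = i \/ k = j.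
Proof.
rewrite /coef2; have [-> _|_] := eqVneq k i; first by left.
by have [-> _|_] := eqVneq k j; [right | rewrite eqxx].
Qed.

Lemma cnorm2_coef2D_le lam M k : cnorm2 lam <= M -> cnorm2 (a + lam) <= M ->
  cnorm2 (b + lam) <= M -> cnorm2 (coef2 i j a b k + lam) <= M.
Proof.
by move=> ? ? ?; rewrite /coef2; case: ifP => _ //; case: ifP => _ //; rewrite add0r.
Qed.

End Coef2.

Lemma badd_scale0 (X Y : balg R n) : badd X (bscale 0 Y) = X.
Proof.
by apply: boolp.functional_extensionality_dep => k; rewrite /badd /bscale scale0r addr0.
Qed.

Section BlockBound.
Variables (X : balg R n) (M : R).
Hypothesis X_le : forall k (w : 'cV_(n k)), vnorm2 (X k *m w) <= M * vnorm2 w.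
Hypothesis M_ge0 : 0 <= M.

Let sum_le v : bvnorm v <= 1 -> \sum_k vnorm2 (bapply X v k) <= M.
Proof.
rewrite /bvnorm -sqrtr1 ler_sqrt // => v_le1.
apply: le_trans (_ : \sum_k M * vnorm2 (v k) <= _); first by apply: ler_sum => k _; apply: X_le.
by rewrite -mulr_sumr ler_piMr.
Qed.

Lemma bnorm_le : bnorm X <= Num.sqrt M.
Proof.
by apply: (sup_sqrt_le sum_le (v0 := fun k => 0));
   rewrite /bvnorm big1 ?sqrtr0 // => k _; rewrite vnorm20.
Qed.

Lemma bnorm_ge_block (i : 'I_l) (v : bvec R n) : vnorm2 (v i) <= 1 ->
  Num.sqrt (vnorm2 (X i *m v i)) <= bnorm X.
Proof.
move=> vi_le1.
have proj_le1 : bvnorm (bvproj i v) <= 1.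
  rewrite /bvnorm (bigD1 i) //= /bvproj eqxx big1 => [|k /negbTE ->].
    by rewrite addr0 -sqrtr1 ler_wsqrtr.
  exact: vnorm20.
have -> : vnorm2 (X i *m v i) = \sum_k vnorm2 (X k *m bvproj i v k).
  rewrite (bigD1 i) //= /bvproj eqxx big1 ?addr0 // => k /negbTE ->.
  by rewrite mulmx0 vnorm20.
exact: (sup_sqrt_ge sum_le proj_le1).
Qed.

End BlockBound.

Section RankOneShift.
Variables (c : 'I_l -> C) (x : bvec R n).
Hypothesis x_unit : forall k, c k != 0 -> vnorm2 (x k) = 1.

Lemma bnorm_rank1_shift_le (lam : C) (M : R) :
    cnorm2 lam <= M -> (forall k, cnorm2 (c k + lam) <= M) ->
  bnorm (badd (brank1 c x) (bscale lam (bone R n))) <= Num.sqrt M.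
Proof.
move=> lam_le c_lam_le; apply: bnorm_le; last exact: le_trans (cnorm2_ge0 _) lam_le.
by move=> k w; exact: rank1_shift_bound (@x_unit k) lam_le (c_lam_le k).
Qed.

Lemma bnorm_rank1_shift_ge (lam : C) (k : 'I_l) : c k != 0 ->
  Num.sqrt (cnorm2 (c k + lam)) <= bnorm (badd (brank1 c x) (bscale lam (bone R n))).
Proof.
move=> ck_neq0; have x1 := x_unit ck_neq0.
pose M := cnorm2 lam + \sum_k' cnorm2 (c k' + lam).
have sum_ge0 : 0 <= \sum_k' cnorm2 (c k' + lam).
  by apply: sumr_ge0 => k' _; apply: cnorm2_ge0.
have lam_le : cnorm2 lam <= M by rewrite /M lerDl.
have c_lam_le k' : cnorm2 (c k' + lam) <= M.
  rewrite /M (bigD1 k') //= addrCA lerDl addr_ge0 ?cnorm2_ge0 //.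
  by apply: sumr_ge0 => ? _; apply: cnorm2_ge0.
rewrite -(rank1_shift_at _ _ x1).
apply: (bnorm_ge_block (M := M)); last by rewrite x1.
  by move=> k' w; exact: rank1_shift_bound (@x_unit k') lam_le (c_lam_le k').
exact: le_trans (cnorm2_ge0 _) lam_le.
Qed.

Lemma bnorm_rank1_eq1 (k0 : 'I_l) :
  cnorm2 (c k0) = 1 -> (forall k, cnorm2 (c k) <= 1) -> bnorm (brank1 c x) = 1.
Proof.
move=> ck0 c_le1; rewrite -(badd_scale0 (brank1 c x) (bone R n)).
apply/le_anti/andP; split.
  rewrite -sqrtr1; apply: bnorm_rank1_shift_le => [|k]; last by rewrite addr0 c_le1.
  by rewrite cnorm20 ler01.
have ck0_neq0 : c k0 != 0.
  by apply/eqP => c0; move: ck0; rewrite c0 cnorm20 => /esym/eqP; rewrite oner_eq0.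
by have := bnorm_rank1_shift_ge 0 ck0_neq0; rewrite addr0 ck0 sqrtr1.
Qed.

End RankOneShift.
End BlockAlgebra.

Theorem lemma6p1 (R : realType) (l : nat) (n : 'I_l -> nat)
  (hn : forall k, (0 < n k)%N) (i j : 'I_l) (hij : i != j)
  (x : forall k : 'I_l, 'cV[R[i]]_(n k))
  (hxi : mxopnorm (x i *m adjmx (x i)) = 1) (hri : \rank (x i *m adjmx (x i)) = 1%N)
  (hxj : mxopnorm (x j *m adjmx (x j)) = 1) (hrj : \rank (x j *m adjmx (x j)) = 1%N) :
  let Rmu (mu : R[i]) : balg R n := fun k =>
    (if k == i then 1 else if k == j then mu else 0) *: (x k *m adjmx (x k)) in
  forall mu : R[i], `|mu| = 1 -> (BJorth (Rmu mu) (bone R n) <-> mu = -1).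
Proof.
move=> Rmu mu /cnorm2_normC1 mu1.
change (Rmu mu) with (brank1 (coef2 i j 1 mu) x).
have x_unit k : coef2 i j 1 mu k != 0 -> vnorm2 (x k) = 1.
  by case/coef2_supp => ->; rewrite -mxopnorm_rank1.
rewrite /BJorth (bnorm_rank1_eq1 x_unit (k0 := i)) ?coef2_l ?cnorm21 //; last first.
  move=> k; rewrite -[coef2 _ _ _ _ k]addr0.
  by apply: cnorm2_coef2D_le; rewrite ?addr0 ?cnorm20 ?cnorm21 ?mu1 ?ler01.
split=> [orth | mu_m1 lam].
  apply/eqP; apply: contraT => mu_neq.
  have [lam [lam_lt1 lam1_lt1 lammu_lt1]] := unimodular_shift_contract mu1 mu_neq.
  pose M := Num.max (cnorm2 lam) (Num.max (cnorm2 (1 + lam)) (cnorm2 (mu + lam))).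
  have M_lt1 : Num.sqrt M < 1.
    by rewrite -sqrtr1 ltr_sqrt ?ltr01 // !gt_max lam_lt1 lam1_lt1 lammu_lt1.
  have lam_le : cnorm2 lam <= M by rewrite !le_max lexx.
  have c_lam_le k : cnorm2 (coef2 i j 1 mu k + lam) <= M.
    by apply: cnorm2_coef2D_le; rewrite !le_max lexx ?orbT.
  have := le_trans (orth lam) (bnorm_rank1_shift_le x_unit lam_le c_lam_le).
  by rewrite leNgt M_lt1.
have [le1|le1] := cnorm2_shift_pm1 lam.
  apply: le_trans (bnorm_rank1_shift_ge x_unit lam (k := i) _); rewrite coef2_l.
    by rewrite -sqrtr1 ler_wsqrtr.
  by rewrite oner_eq0.
apply: le_trans (bnorm_rank1_shift_ge x_unit lam (k := j) _); rewrite coef2_r // mu_m1.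
  by rewrite -sqrtr1 ler_wsqrtr.
by rewrite oppr_eq0 oner_eq0.
Qed.
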